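(* Let $\kappa$ be a regular uncountable cardinal and let $\mu,\lambda,\chi,\theta\le\kappa$ be cardinals with $\lambda^{<\chi}<\kappa\le2^\lambda$ and $\lambda^{<\chi}\le\theta^{<\chi}=\theta$. For every coloring $c_1:[\kappa]^2\to\theta$ there exists a coloring $c_0:[\kappa]^2\to\theta$ such that for every partition $p:[\kappa]^2\to\mu$: (1) if $c_1$ witnesses $\mathrm{pr}_1(\kappa,\kappa,\theta,\chi)_p$ then $c_0$ witnesses $\mathrm{pr}_0(\kappa,\kappa,\theta,\chi)_p$; (2) for every cardinal $\nu$, if $c_1$ witnesses $\mathrm{pr}_1(\kappa,\nu\circledast\kappa/1\circledast\kappa,\theta,\chi)_p$ then $c_0$ witnesses $\mathrm{pr}_0(\kappa,\nu\circledast\kappa/1\circledast\kappa,\theta,\chi)_p$.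
   Context: $[\kappa]^2$ denotes the set of pairs $(\alpha,\beta)$ with $\alpha<\beta<\kappa$; a partition is any function $p:[\kappa]^2\to\mu$. For an ordinal $\sigma$, $[\kappa]^\sigma$ is the set of subsets of $\kappa$ of order type $\sigma$; for $a\in[\kappa]^\sigma$ and $i<\sigma$, $a(i)$ is the $i$-th element of $a$; $a<b$ means every element of $a$ is below every element of $b$. Given $p:[\kappa]^2\to\mu$, a coloring $c:[\kappa]^2\to\theta$ witnesses: - $\mathrm{pr}_1(\kappa,\kappa,\theta,\chi)_p$ iff for every ordinal $\sigma<\chi$, every pairwise disjoint $\mathcal A\subseteq[\kappa]^\sigma$ of size $\kappa$ and every $\tau:\mu\to\theta$ there are $a,b\in\mathcal A$, $a<b$, with $c(\alpha,\beta)=\tau(p(\alpha,\beta))$ for all $\alpha\in a,\beta\in b$; - $\mathrm{pr}_0(\kappa,\kappa,\theta,\chi)_p$ iff for every ordinal $\sigma<\chi$, every pairwise disjoint $\mathcal A\subseteq[\kappa]^\sigma$ of size $\kappa$ and every matrix $(\tau_{i,j})_{i,j<\sigma}$ of functions $\mu\to\theta$ there are $a,b\in\mathcal A$, $a<b$, with $c(a(i),b(j))=\tau_{i,j}(p(a(i),b(j)))$ for all $i,j<\sigma$; - $\mathrm{pr}_1(\kappa,\nu\circledast\kappa/1\circledast\kappa,\theta,\chi)_p$ iff for every ordinal $\sigma<\chi$ and every two families $\mathcal A,\mathcal B\subseteq[\kappa]^\sigma$, each pairwise disjoint, with $|\mathcal A|=\nu$, $|\mathcal B|=\kappa$, there is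 $a\in\mathcal A$ such that for every $\tau:\mu\to\theta$ there is $b\in\mathcal B$ with $a<b$ and $c(\alpha,\beta)=\tau(p(\alpha,\beta))$ for all $\alpha\in a,\beta\in b$; - $\mathrm{pr}_0(\kappa,\nu\circledast\kappa/1\circledast\kappa,\theta,\chi)_p$ iff for every ordinal $\sigma<\chi$ and every two families $\mathcal A,\mathcal B\subseteq[\kappa]^\sigma$, each pairwise disjoint, with $|\mathcal A|=\nu$, $|\mathcal B|=\kappa$, there is $a\in\mathcal A$ such that for every matrix $(\tau_{i,j})_{i,j<\sigma}$ of functions $\mu\to\theta$ there is $b\in\mathcal B$ with $a<b$ and $c(a(i),b(j))=\tau_{i,j}(p(a(i),b(j)))$ for all $i,j<\sigma$. *)

(* cardinals are modelled by types (compared by injections),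
   ordinals below a cardinal by elements of a well-ordered type of that
   cardinality (an initial ordinal). *)
From Stdlib Require Import Relations Wellfounded.

Set Implicit Arguments.

Definition card_le (A B : Type) : Prop := exists f : A -> B, forall x y, f x = f y -> x = y.
Definition card_lt (A B : Type) : Prop := card_le A B /\ ~ card_le B A.
Definition card_eq (A B : Type) : Prop := card_le A B /\ card_le B A.

Definition strict_wo (T : Type) (R : T -> T -> Prop) : Prop :=
  (forall x, ~ R x x) /\ (forall x y z, R x y -> R y z -> R x z) /\
  (forall x y, R x y \/ x = y \/ R y x) /\ well_founded R.

Definition seg (T : Type) (R : T -> T -> Prop) (x : T) : Type := {y : T | R y x}.

Definition is_cardinal (T : Type) (R : T -> T -> Prop) : Prop :=
  strict_wo R /\ forall x : T, card_lt (seg R x) T.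

Definition regular (T : Type) (R : T -> T -> Prop) : Prop :=
  forall S : T -> Prop, card_lt {x : T | S x} T ->
    exists b : T, forall x, S x -> R x b.

Definition uncountable (T : Type) : Prop := ~ card_le T nat.

(* L^{<X} : the set of all functions from some ordinal sigma < chi into L *)
Definition lpow (L X : Type) (RX : X -> X -> Prop) : Type :=
  {s : X & (seg RX s -> L)}.

Section Pr.
Variables (K X M Th : Type) (ltK : K -> K -> Prop) (ltX : X -> X -> Prop).

(* an element of [kappa]^sigma, sigma = ordertype of seg s, presented by its
   increasing enumeration i |-> a(i) *)
Definition incr (s : X) (a : seg ltX s -> K) : Prop :=
  forall i j : seg ltX s, ltX (proj1_sig i) (proj1_sig j) -> ltK (a i) (a j).

(* (A_n)_{n : I} is a pairwise disjoint family in [kappa]^sigma, injectively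
   indexed (so its size is |I|) *)
Definition good_family (I : Type) (s : X) (A : I -> seg ltX s -> K) : Prop :=
  (forall n, incr (A n)) /\
  (forall n m, n <> m -> forall i j, A n i <> A m j) /\
  (forall n m, (forall i, A n i = A m i) -> n = m).

Definition blt (s : X) (a b : seg ltX s -> K) : Prop :=
  forall i j, ltK (a i) (b j).

Definition pr1 (c : K -> K -> Th) (p : K -> K -> M) : Prop :=
  forall (s : X) (A : K -> seg ltX s -> K), good_family A ->
  forall tau : M -> Th, exists n m, blt (A n) (A m) /\
    forall i j, c (A n i) (A m j) = tau (p (A n i) (A m j)).

Definition pr0 (c : K -> K -> Th) (p : K -> K -> M) : Prop :=
  forall (s : X) (A : K -> seg ltX s -> K), good_family A ->
  forall tau : seg ltX s -> seg ltX s -> M -> Th, exists n m, blt (A n) (A m) /\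
    forall i j, c (A n i) (A m j) = tau i j (p (A n i) (A m j)).

Definition pr1nu (N : Type) (c : K -> K -> Th) (p : K -> K -> M) : Prop :=
  forall (s : X) (A : N -> seg ltX s -> K) (B : K -> seg ltX s -> K),
  good_family A -> good_family B ->
  exists n, forall tau : M -> Th, exists m, blt (A n) (B m) /\
    forall i j, c (A n i) (B m j) = tau (p (A n i) (B m j)).

Definition pr0nu (N : Type) (c : K -> K -> Th) (p : K -> K -> M) : Prop :=
  forall (s : X) (A : N -> seg ltX s -> K) (B : K -> seg ltX s -> K),
  good_family A -> good_family B ->
  exists n, forall tau : seg ltX s -> seg ltX s -> M -> Th, exists m, blt (A n) (B m) /\
    forall i j, c (A n i) (B m j) = tau i j (p (A n i) (B m j)).
End Pr.

(* Fix an injection e of kappa into 2^lambda.  For a in [kappa]^sigma and i <> j pick a point of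
   lambda where e(a(i)) and e(a(j)) differ, together with the value of e(a(i)) there.  This
   separation record lies in a set of size lambda^|sigma x sigma| = lambda^|sigma| < kappa
   (Hessenberg's |sigma x sigma| = |sigma| for infinite sigma), so by regularity kappa members of
   any disjoint family share one record d; and d recognises each element of a member together
   with its index.  As theta^{<chi} = theta, a colour can code an ordinal sigma, two records and a
   sigma x sigma matrix of colours.  So c0(alpha, beta) decodes c1(alpha, beta), locates alpha and
   beta as the i-th and j-th elements using the records, and returns the (i, j) entry; pr_1 for
   the colouring mu |-> code(sigma, d, d, (tau_ij(mu))_ij) then gives pr_0.  If chi <= 2 every
   sigma < chi is at most 1, pr_0 is pr_1, and c0 = c1 works. *)

From Stdlib Require Import Classical ClassicalEpsilon FunctionalExtensionality ProofIrrelevance.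
From Stdlib Require Import List Lia FinFun Wellfounded Inverse_Image.

Lemma sig_eq {A} {P : A -> Prop} (x y : sig P) : proj1_sig x = proj1_sig y -> x = y.
Proof. apply eq_sig_hprop; intros; apply proof_irrelevance. Qed.

Definition pick {A} {P : A -> Prop} (h : exists x, P x) : A :=
  proj1_sig (constructive_indefinite_description P h).

Lemma pick_spec {A} {P : A -> Prop} (h : exists x, P x) : P (pick h).
Proof. exact (proj2_sig (constructive_indefinite_description P h)). Qed.

Definition opt_choice {A} (P : A -> Prop) : option A :=
  match excluded_middle_informative (exists x, P x) with
  | left h => Some (pick h)
  | right _ => None
  end.

Lemma opt_choice_unique {A} (P : A -> Prop) a :
  P a -> (forall b, P b -> b = a) -> opt_choice P = Some a.
Proof.
  intros Ha Huniq. unfold opt_choice.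
  destruct (excluded_middle_informative (exists x, P x)) as [h | h].
  - f_equal. apply Huniq, pick_spec.
  - exfalso. apply h. now exists a.
Qed.

Lemma card_le_refl A : card_le A A.
Proof. now exists (fun x => x). Qed.

Lemma card_le_trans A B C : card_le A B -> card_le B C -> card_le A C.
Proof. intros [f Hf] [g Hg]. exists (fun x => g (f x)). auto. Qed.

Lemma card_le_prod A A' B B' : card_le A A' -> card_le B B' -> card_le (A * B) (A' * B').
Proof.
  intros [f Hf] [g Hg]. exists (fun p => (f (fst p), g (snd p))).
  intros [a b] [a' b'] E. injection E as Ea Eb. f_equal; auto.
Qed.

Lemma card_le_arrow S A B : card_le A B -> card_le (S -> A) (S -> B).
Proof.
  intros [f Hf]. exists (fun g x => f (g x)). intros g g' E.
  apply functional_extensionality. intro x. apply Hf. exact (equal_f E x).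
Qed.

Lemma card_le_arrow_prod S A B : card_le (S -> A * B) ((S -> A) * (S -> B)).
Proof.
  exists (fun g => (fun x => fst (g x), fun x => snd (g x))). intros g g' E.
  apply functional_extensionality. intro x. apply injective_projections.
  - exact (equal_f (f_equal fst E) x).
  - exact (equal_f (f_equal snd E) x).
Qed.

Lemma card_le_curry S T Z : card_le (S -> T -> Z) (S * T -> Z).
Proof.
  exists (fun g p => g (fst p) (snd p)). intros g g' E.
  apply functional_extensionality. intro x. apply functional_extensionality. intro y.
  exact (equal_f E (x, y)).
Qed.

Lemma card_le_arrow_dom A B Z : inhabited Z -> card_le A B -> card_le (A -> Z) (B -> Z).
Proof.
  intros [z0] [h Hh].
  exists (fun g b => match opt_choice (fun a => h a = b) with Some a => g a | None => z0 end).
  intros g g' E. apply functional_extensionality. intro a.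
  pose proof (equal_f E (h a)) as Ea. simpl in Ea.
  rewrite (opt_choice_unique (fun a' => h a' = h a) a) in Ea; auto.
Qed.

Lemma card_le_sigT A (F : A -> Type) B :
  (forall x, card_le (F x) B) -> card_le {x : A & F x} (A * B).
Proof.
  intro H. exists (fun z => (projT1 z, pick (H (projT1 z)) (projT2 z))).
  intros [x z] [x' z'] E. simpl in E. injection E as Ex Ez. subst x'.
  f_equal. exact (pick_spec (H x) z z' Ez).
Qed.

Lemma card_le_of_surjective A B (f : B -> A) : Surjective f -> card_le A B.
Proof.
  intro H. exists (fun a => pick (H a)). intros a a' E.
  rewrite <- (pick_spec (H a)), <- (pick_spec (H a')), E. reflexivity.
Qed.

Lemma card_le_option_square A :
  card_le (A * A) A -> card_le nat A -> card_le (option A * option A) A.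
Proof.
  intros Hsq [g Hg].
  assert (Hopt : card_le (option A) (A * A)).
  { exists (fun o => match o with Some a => (a, g 0) | None => (g 0, g 1) end).
    assert (H01 : g 0 <> g 1) by (intro E; discriminate (Hg 0 1 E)).
    intros [a|] [a'|] E; inversion E; congruence. }
  apply (card_le_trans _ ((A * A) * (A * A))); [now apply card_le_prod|].
  apply (card_le_trans _ (A * A)); [now apply card_le_prod | exact Hsq].
Qed.

Lemma Finite_option T : Finite T -> Finite (option T).
Proof.
  intros [l Hl]. exists (None :: map Some l). intros [x|]; simpl; auto.
  right. apply in_map, Hl.
Qed.

Lemma Finite_prod A B : Finite A -> Finite B -> Finite (A * B).
Proof. intros [l Hl] [l' Hl']. exists (list_prod l l'). intros [a b]. now apply in_prod. Qed.

Lemma not_card_le_nat_Finite T : Finite T -> ~ card_le nat T.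
Proof.
  intros [l Hl] [f Hf].
  assert (Hnd : NoDup (map f (seq 0 (S (length l)))))
    by (apply Injective_map_NoDup; [exact Hf | apply seq_NoDup]).
  pose proof (NoDup_incl_length Hnd (fun x _ => Hl x)) as Hlen.
  rewrite length_map, length_seq in Hlen. lia.
Qed.

Fixpoint fresh_list {T} (fresh : list T -> T) (n : nat) : list T :=
  match n with
  | 0 => nil
  | S n => fresh (fresh_list fresh n) :: fresh_list fresh n
  end.

Lemma Finite_or_card_le_nat T : Finite T \/ card_le nat T.
Proof.
  destruct (classic (Finite T)) as [H | H]; [now left | right].
  assert (Hfresh : forall l : list T, exists x, ~ In x l).
  { intro l. apply NNPP. intro Hn. apply H. exists l. intro x.
    apply NNPP. intro Hx. apply Hn. now exists x. }
  set (fresh := fun l => pick (Hfresh l)).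
  set (g := fun n => fresh (fresh_list fresh n)).
  assert (Hin : forall m n, m < n -> In (g m) (fresh_list fresh n)).
  { intros m n. induction n as [|n IH]; intro Hmn; [lia|]. simpl.
    destruct (PeanoNat.Nat.eq_dec m n) as [-> | Hne]; [now left | right; apply IH; lia]. }
  exists g. intros m n E.
  destruct (PeanoNat.Nat.lt_trichotomy m n) as [Hlt | [Heq | Hlt]]; auto; exfalso.
  - apply (pick_spec (Hfresh (fresh_list fresh n))). fold (fresh (fresh_list fresh n)).
    fold (g n). rewrite <- E. now apply Hin.
  - apply (pick_spec (Hfresh (fresh_list fresh m))). fold (fresh (fresh_list fresh m)).
    fold (g m). rewrite E. now apply Hin.
Qed.

Lemma card_le_of_wf_total P W (G : P -> P -> Prop) :
  inhabited W -> well_founded G -> (forall p q, G p q \/ p = q \/ G q p) ->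
  (forall p, ~ card_le W {q | G q p}) -> card_le P W.
Proof.
  intros iW wf tot Hsmall.
  set (F := fun p (rec : forall q, G q p -> W) =>
              epsilon iW (fun w => forall q (h : G q p), rec q h <> w)).
  set (f := Fix wf (fun _ => W) F).
  assert (Hf : forall p, f p = F p (fun q _ => f q)).
  { intro p. apply (Fix_eq wf (fun _ => W) F). intros x r1 r2 E. unfold F.
    replace r2 with r1; [reflexivity|].
    apply functional_extensionality_dep. intro q. apply functional_extensionality. apply E. }
  assert (Hnew : forall p q, G q p -> f q <> f p).
  { intro p.
    assert (Hex : exists w, forall q (h : G q p), f q <> w).
    { apply NNPP. intro Hn. apply (Hsmall p).
      apply (card_le_of_surjective _ _ (fun z : {q | G q p} => f (proj1_sig z))).
      intro w. apply NNPP. intro Hw. apply Hn. exists w. intros q h E. apply Hw.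
      now exists (exist _ q h). }
    rewrite (Hf p). exact (epsilon_spec iW _ Hex). }
  exists f. intros p q E. destruct (tot p q) as [h | [h | h]]; auto; exfalso.
  - exact (Hnew q p h E).
  - exact (Hnew p q h (eq_sym E)).
Qed.

Definition lex {A B} (RA : A -> A -> Prop) (RB : B -> B -> Prop) (p q : A * B) : Prop :=
  RA (fst p) (fst q) \/ (fst p = fst q /\ RB (snd p) (snd q)).

Lemma wf_lex {A B} (RA : A -> A -> Prop) (RB : B -> B -> Prop) :
  well_founded RA -> well_founded RB -> well_founded (lex RA RB).
Proof.
  intros wfA wfB [a b]. revert b. induction (wfA a) as [a _ IHa]. intro b.
  induction (wfB b) as [b _ IHb]. constructor. intros [a' b'] [h | [E h]]; simpl in *.
  - now apply IHa.
  - subst. now apply IHb.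
Qed.

Lemma lex_trichotomous {A B} (RA : A -> A -> Prop) (RB : B -> B -> Prop) :
  (forall x y, RA x y \/ x = y \/ RA y x) -> (forall x y, RB x y \/ x = y \/ RB y x) ->
  forall p q, lex RA RB p q \/ p = q \/ lex RA RB q p.
Proof.
  unfold lex. intros triA triB [a b] [a' b']; simpl.
  destruct (triA a a') as [h | [<- | h]]; auto.
  destruct (triB b b') as [h | [<- | h]]; auto.
Qed.

Section Hessenberg.
Variables (X : Type) (ltX : X -> X -> Prop).
Hypothesis HX : strict_wo ltX.

Definition leX (x y : X) : Prop := ltX x y \/ x = y.

Lemma leX_trans x y z : leX x y -> leX y z -> leX x z.
Proof.
  destruct HX as [_ [trans _]].
  intros [h1 | <-] [h2 | <-]; [left; eauto | left | left | right]; auto.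
Qed.

Definition maxX (a b : X) : X := if excluded_middle_informative (ltX a b) then b else a.

Lemma maxX_cases a b : maxX a b = a \/ maxX a b = b.
Proof. unfold maxX. destruct (excluded_middle_informative (ltX a b)); auto. Qed.

Lemma le_maxX a b : leX a (maxX a b) /\ leX b (maxX a b).
Proof.
  destruct HX as [_ [_ [tri _]]]. unfold leX, maxX.
  destruct (excluded_middle_informative (ltX a b)) as [h | h]; split; auto.
  destruct (tri a b) as [? | [? | ?]]; auto; contradiction.
Qed.

Definition godel (p q : X * X) : Prop :=
  lex ltX (lex ltX ltX) (maxX (fst p) (snd p), p) (maxX (fst q) (snd q), q).

Lemma godel_wf : well_founded godel.
Proof.
  destruct HX as [_ [_ [_ wf]]].
  apply (wf_inverse_image _ _ _ (fun p => (maxX (fst p) (snd p), p))).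
  apply wf_lex; [exact wf | apply wf_lex; exact wf].
Qed.

Lemma godel_trichotomous p q : godel p q \/ p = q \/ godel q p.
Proof.
  destruct HX as [_ [_ [tri _]]]. unfold godel.
  destruct (lex_trichotomous _ _ tri (lex_trichotomous _ _ tri tri)
              (maxX (fst p) (snd p), p) (maxX (fst q) (snd q), q)) as [h | [E | h]]; auto.
  right; left. exact (f_equal snd E).
Qed.

Lemma godel_pred_le p q :
  godel q p -> leX (fst q) (maxX (fst p) (snd p)) /\ leX (snd q) (maxX (fst p) (snd p)).
Proof.
  intro h. assert (Hm : leX (maxX (fst q) (snd q)) (maxX (fst p) (snd p)))
    by (destruct h as [h | [E _]]; [now left | now right]).
  destruct (le_maxX (fst q) (snd q)). split; eapply leX_trans; eauto.
Qed.

Lemma card_le_closed_seg m : card_le {y | leX y m} (option (seg ltX m)).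
Proof.
  exists (fun y => match excluded_middle_informative (ltX (proj1_sig y) m) with
             | left h => Some (exist (fun z => ltX z m) _ h) | right _ => None end).
  intros [y hy] [y' hy'] E; simpl in E. apply sig_eq; simpl.
  destruct (excluded_middle_informative (ltX y m));
    destruct (excluded_middle_informative (ltX y' m)); try discriminate.
  - now injection E.
  - destruct hy, hy'; congruence.
Qed.

Lemma card_le_godel_pred p :
  card_le {q | godel q p}
    (option (seg ltX (maxX (fst p) (snd p))) * option (seg ltX (maxX (fst p) (snd p)))).
Proof.
  set (m := maxX (fst p) (snd p)).
  apply (card_le_trans _ ({y | leX y m} * {y | leX y m}));
    [| apply card_le_prod; apply card_le_closed_seg].
  exists (fun q => (exist (fun y => leX y m) _ (proj1 (godel_pred_le p _ (proj2_sig q))),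
                    exist (fun y => leX y m) _ (proj2 (godel_pred_le p _ (proj2_sig q))))).
  intros [[a b] h] [[a' b'] h'] E. injection E as Ea Eb. apply sig_eq; simpl. congruence.
Qed.

Lemma card_le_seg_lt t t' : ltX t' t -> card_le (seg ltX t') (seg ltX t).
Proof.
  destruct HX as [_ [trans _]]. intro h.
  exists (fun y => exist _ (proj1_sig y) (trans _ _ _ (proj2_sig y) h)).
  intros y y' E. apply sig_eq. exact (f_equal (@proj1_sig _ _) E).
Qed.

(* If seg t injects into a shorter segment use induction; otherwise every proper initial
   segment of its square in the Goedel order lies in the square of a closed segment
   {y | y <= m} with m < t. *)
Theorem card_le_seg_square t :
  card_le nat (seg ltX t) -> card_le (seg ltX t * seg ltX t) (seg ltX t).
Proof.
  destruct HX as [_ [_ [_ wf]]].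
  induction t as [t IH] using (well_founded_induction wf). intro Hnat.
  destruct (classic (exists t', ltX t' t /\ card_le (seg ltX t) (seg ltX t')))
    as [[t' [Ht' Hle]] | Hinit].
  { apply (card_le_trans _ (seg ltX t' * seg ltX t')); [now apply card_le_prod|].
    apply (card_le_trans _ (seg ltX t')); [| now apply card_le_seg_lt].
    apply IH; [exact Ht' | exact (card_le_trans _ _ _ Hnat Hle)]. }
  set (val2 := fun q : seg ltX t * seg ltX t => (proj1_sig (fst q), proj1_sig (snd q))).
  assert (val2_inj : Injective val2).
  { intros [a b] [a' b'] E. injection E as Ea Eb. f_equal; now apply sig_eq. }
  apply (card_le_of_wf_total _ _ (fun q r => godel (val2 q) (val2 r))).
  - destruct Hnat as [g _]. exact (inhabits (g 0)).
  - apply wf_inverse_image, godel_wf.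
  - intros q r. destruct (godel_trichotomous (val2 q) (val2 r)) as [h | [E | h]]; auto.
  - intros [a b] Hle. set (m := maxX (proj1_sig a) (proj1_sig b)).
    assert (Hm : ltX m t)
      by (unfold m; destruct (maxX_cases (proj1_sig a) (proj1_sig b)) as [-> | ->];
          apply proj2_sig).
    assert (Hpred : card_le (seg ltX t) (option (seg ltX m) * option (seg ltX m))).
    { apply (card_le_trans _ _ _ Hle), (card_le_trans _ {q | godel q (val2 (a, b))});
        [| apply (card_le_godel_pred (val2 (a, b)))].
      exists (fun r : {q | godel (val2 q) (val2 (a, b))} =>
                exist (fun q => godel q (val2 (a, b))) (val2 (proj1_sig r)) (proj2_sig r)).
      intros r r' E. apply sig_eq, val2_inj. exact (f_equal (@proj1_sig _ _) E). }
    destruct (Finite_or_card_le_nat (seg ltX m)) as [Hfin | Hm_nat].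
    + apply (not_card_le_nat_Finite (option (seg ltX m) * option (seg ltX m))).
      * apply Finite_prod; now apply Finite_option.
      * exact (card_le_trans _ _ _ Hnat Hpred).
    + apply Hinit. exists m. split; [exact Hm|].
      apply (card_le_trans _ _ _ Hpred), card_le_option_square; [now apply IH | exact Hm_nat].
Qed.

End Hessenberg.

Section Regular.
Context {K : Type} {ltK : K -> K -> Prop}.
Hypotheses (HK : is_cardinal ltK) (Hreg : regular ltK).

Lemma regular_bounded (S : K -> Prop) :
  ~ card_le K {x | S x} -> exists b, forall x, S x -> ltK x b.
Proof.
  intro HS. apply Hreg. split; [| exact HS].
  exists (@proj1_sig _ _). intros x y. apply sig_eq.
Qed.

Lemma pigeonhole {C} (f : K -> C) : ~ card_le K C -> exists c, card_le K {n | f n = c}.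
Proof.
  intro HC. destruct HK as [[_ [trans _]] Hseg].
  apply NNPP. intro Hfib.
  assert (Hb : forall c, exists b, forall n, f n = c -> ltK n b).
  { intro c. apply regular_bounded. intro Hc. apply Hfib. now exists c. }
  set (bound := fun c => pick (Hb c)).
  destruct (regular_bounded (fun x => exists c, x = bound c)) as [B HB].
  { intro Hle. apply HC. apply (card_le_trans _ _ _ Hle).
    apply (card_le_of_surjective _ _ (fun c => exist _ (bound c) (ex_intro _ c eq_refl))).
    intros [x [c ->]]. exists c. now apply sig_eq. }
  apply (proj2 (Hseg B)).
  exists (fun n => exist _ n (trans _ _ _ (pick_spec (Hb (f n)) n eq_refl)
                                    (HB _ (ex_intro _ (f n) eq_refl)))).
  intros n n' E. exact (f_equal (@proj1_sig _ _) E).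
Qed.

Lemma not_card_le_prod {A B} : ~ card_le K A -> ~ card_le K B -> ~ card_le K (A * B).
Proof.
  intros HA HB [g Hg]. destruct (pigeonhole (fun n => fst (g n)) HA) as [a [h Hh]].
  apply HB. exists (fun n => snd (g (proj1_sig (h n)))). intros n n' E.
  apply Hh, sig_eq, Hg, injective_projections; [| exact E].
  now rewrite (proj2_sig (h n)), (proj2_sig (h n')).
Qed.

Hypothesis Hunc : uncountable K.

Lemma not_card_le_vector {Z} (z0 : Z) :
  ~ card_le K Z -> forall n, ~ card_le K {ls : list Z | length ls = n}.
Proof.
  intros HZ n. induction n as [|n IH]; intro H.
  - apply Hunc, (card_le_trans _ _ _ H). exists (fun _ => 0).
    intros [[|z l] h] [[|z' l'] h'] _; try discriminate. now apply sig_eq.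
  - apply (not_card_le_prod HZ IH), (card_le_trans _ _ _ H).
    assert (Htl : forall ls : {ls : list Z | length ls = S n}, length (tl (proj1_sig ls)) = n)
      by (intros [[|z l] h]; simpl in *; [discriminate | now injection h]).
    exists (fun ls => (hd z0 (proj1_sig ls), exist (fun l => length l = n) _ (Htl ls))).
    intros [[|z l] h] [[|z' l'] h'] E; try discriminate.
    injection E as Ez El. apply sig_eq; simpl. congruence.
Qed.

Lemma not_card_le_Finite_arrow {T Z} (z0 : Z) :
  Finite T -> ~ card_le K Z -> ~ card_le K (T -> Z).
Proof.
  intros [l Hl] HZ H. apply (not_card_le_vector z0 HZ (length l)), (card_le_trans _ _ _ H).
  exists (fun g => exist _ (map g l) (length_map g l)). intros g g' E.
  apply functional_extensionality. intro x.
  apply (proj1 (map_ext_in_iff (f := g) (g := g') (l := l))); [| apply Hl].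
  exact (f_equal (@proj1_sig _ _) E).
Qed.

Lemma not_card_le_square_arrow {T Z} (z0 : Z) :
  Finite T \/ card_le (T * T) T -> ~ card_le K (T -> Z) -> ~ card_le K (T -> T -> Z).
Proof.
  intros [Hfin | Hsq] HZ H.
  - exact (not_card_le_Finite_arrow (fun _ => z0) Hfin HZ H).
  - apply HZ, (card_le_trans _ _ _ H), (card_le_trans _ _ _ (card_le_curry T T Z)).
    exact (card_le_arrow_dom _ _ _ (inhabits z0) Hsq).
Qed.

End Regular.

Lemma uncountable_inhabited {K} : uncountable K -> inhabited K.
Proof.
  intro Hunc. apply NNPP. intro H. apply Hunc.
  exists (fun k => match H (inhabits k) with end). intro x. destruct (H (inhabits x)).
Qed.

Lemma uncountable_two_points {K L} :
  uncountable K -> card_le K (L -> bool) -> exists l0 l1 : L, l0 <> l1.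
Proof.
  intros Hunc HK. apply NNPP. intro H.
  assert (Heq : forall a b : L, a = b) by (intros a b; apply NNPP; eauto).
  apply Hunc, (card_le_trans _ _ _ HK).
  exists (fun f => if excluded_middle_informative (exists l, f l = true) then 1 else 0).
  intros f g E. apply functional_extensionality. intro x.
  destruct (excluded_middle_informative (exists l, f l = true)) as [[l hl] | hf];
    destruct (excluded_middle_informative (exists l, g l = true)) as [[l' hl'] | hg];
    try discriminate.
  - rewrite (Heq x l) at 1. rewrite (Heq x l'). congruence.
  - destruct (f x) eqn:Ef, (g x) eqn:Eg; auto; exfalso; eauto.
Qed.

Section Families.
Context {K X : Type} {ltK : K -> K -> Prop} {ltX : X -> X -> Prop}.

Lemma good_family_comp {I J s} {A : I -> seg ltX s -> K} {r : J -> I} :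
  Injective r -> good_family ltK A -> good_family ltK (fun n => A (r n)).
Proof.
  intros Hr [Hincr [Hdisj Hinj]]. split; [| split].
  - intro n. apply Hincr.
  - intros n m Hnm. apply Hdisj. intro E. apply Hnm, Hr, E.
  - intros n m E. apply Hr, Hinj, E.
Qed.

Lemma good_family_member_injective {I s} {A : I -> seg ltX s -> K} {n} :
  strict_wo ltK -> strict_wo ltX -> good_family ltK A -> Injective (A n).
Proof.
  intros [irrK _] [_ [_ [triX _]]] [Hincr _] i j E.
  destruct (triX (proj1_sig i) (proj1_sig j)) as [h | [h | h]].
  - exfalso. apply (irrK (A n i)). rewrite E at 2. now apply Hincr.
  - now apply sig_eq.
  - exfalso. apply (irrK (A n i)). rewrite E at 1. now apply Hincr.
Qed.

End Families.

(* The separation record [sep a]: entry (i, j) is a point where [e (a i)] and [e (a j)] differ,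
   with the value of [e (a i)] there.  Given the record, [a i] is the only element fitting row [i]. *)
Section Separation.
Context {K L S : Type}.
Variables (e : K -> L -> bool) (l0 : L).

Definition sep (a : S -> K) (i j : S) : L * bool :=
  let x := epsilon (inhabits l0) (fun x => e (a i) x <> e (a j) x) in (x, e (a i) x).

Definition fits (d : S -> S -> L * bool) (al : K) (i : S) : Prop :=
  forall j, j <> i -> e al (fst (d i j)) = snd (d i j).

Lemma fits_sep a i : fits (sep a) (a i) i.
Proof. now intros j _. Qed.

Lemma fits_sep_unique a i k : Injective e -> Injective a -> fits (sep a) (a k) i -> i = k.
Proof.
  intros He Ha Hfit. apply NNPP. intro Hne.
  assert (Hex : exists x, e (a i) x <> e (a k) x).
  { apply NNPP. intro Hn. apply Hne, Ha, He, functional_extensionality. intro x.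
    apply NNPP. intro Hx. apply Hn. now exists x. }
  exact (epsilon_spec (inhabits l0) _ Hex (eq_sym (Hfit k (fun E => Hne (eq_sym E))))).
Qed.

End Separation.

Section Subsingleton.
Context {K X M Th : Type} {ltK : K -> K -> Prop} {ltX : X -> X -> Prop}.
Variable th0 : Th.
Hypothesis Hsub : forall s (i j : seg ltX s), i = j.

Definition diag s (tau : seg ltX s -> seg ltX s -> M -> Th) (mu : M) : Th :=
  epsilon (inhabits th0) (fun y => forall i, tau i i mu = y).

Lemma diag_spec s tau mu i j : diag s tau mu = tau i j mu.
Proof.
  rewrite (Hsub s j i). symmetry.
  apply (epsilon_spec (inhabits th0) (fun y => forall i, tau i i mu = y)).
  exists (tau i i mu). intro i'. now rewrite (Hsub s i' i).
Qed.

Lemma pr0_of_pr1_subsingleton (c : K -> K -> Th) (p : K -> K -> M) :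
  pr1 ltK ltX c p -> pr0 ltK ltX c p.
Proof.
  intros H1 s A HA tau. destruct (H1 s A HA (diag s tau)) as [n [m [Hlt Hc]]].
  exists n, m. split; [exact Hlt|]. intros i j. rewrite Hc. apply diag_spec.
Qed.

Lemma pr0nu_of_pr1nu_subsingleton N (c : K -> K -> Th) (p : K -> K -> M) :
  pr1nu ltK ltX N c p -> pr0nu ltK ltX N c p.
Proof.
  intros H1 s A B HA HB. destruct (H1 s A B HA HB) as [n Hn]. exists n. intro tau.
  destruct (Hn (diag s tau)) as [m [Hlt Hc]].
  exists m. split; [exact Hlt|]. intros i j. rewrite Hc. apply diag_spec.
Qed.

End Subsingleton.

Definition matrix {X} (ltX : X -> X -> Prop) s Z : Type := seg ltX s -> seg ltX s -> Z.

(* A code lists an ordinal [s < chi], the separation records of two members of [[kappa]^s]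
   and a matrix of colours. *)
Definition code (L Th : Type) {X} (ltX : X -> X -> Prop) : Type :=
  {s : X & (matrix ltX s (L * bool) * matrix ltX s (L * bool) * matrix ltX s Th)%type}.

Section Coding.
Context {X Th : Type} {ltX : X -> X -> Prop}.
Variable th0 : Th.
Hypothesis Hpow : card_le (lpow Th ltX) Th.
Context {s2 : X} {u v : seg ltX s2}.
Hypothesis Huv : u <> v.

Lemma card_le_seg_arrow s : card_le (seg ltX s -> Th) Th.
Proof.
  apply (card_le_trans _ (lpow Th ltX)); [| exact Hpow].
  exists (existT _ s).
  intros g g'. apply inj_pairT2.
Qed.

Lemma card_le_square : card_le (Th * Th) Th.
Proof.
  apply (card_le_trans _ (seg ltX s2 -> Th)); [| apply card_le_seg_arrow].
  exists (fun yz w => if excluded_middle_informative (w = u) then fst yz else snd yz).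
  intros [y z] [y' z'] E. simpl in E. f_equal.
  - pose proof (equal_f E u) as Eu. simpl in Eu.
    destruct (excluded_middle_informative (u = u)); congruence.
  - pose proof (equal_f E v) as Ev. simpl in Ev.
    destruct (excluded_middle_informative (v = u)); congruence.
Qed.

Lemma card_le_matrix s Z : card_le Z Th -> card_le (matrix ltX s Z) Th.
Proof.
  intro HZ. apply (card_le_trans _ (seg ltX s -> seg ltX s -> Th)); [now do 2 apply card_le_arrow|].
  apply (card_le_trans _ (seg ltX s -> Th)); [apply card_le_arrow, card_le_seg_arrow|].
  apply card_le_seg_arrow.
Qed.

Lemma card_le_chi : card_le X Th.
Proof.
  apply (card_le_trans _ (lpow Th ltX)); [| exact Hpow].
  exists (fun s => existT _ s (fun _ => th0)).
  intros s s' E. exact (f_equal (@projT1 _ _) E).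
Qed.

Lemma card_le_code {L} {l0 l1 : L} :
  l0 <> l1 -> card_le (lpow L ltX) Th -> card_le (code L Th ltX) Th.
Proof.
  intros Hl HL.
  assert (HLTh : card_le L Th).
  { apply (card_le_trans _ (lpow L ltX)); [| exact HL].
    exists (fun l => existT _ s2 (fun _ => l)).
    intros l l' E. exact (equal_f (inj_pairT2 _ _ _ _ _ E) u). }
  assert (HLB : card_le (L * bool) Th).
  { apply (card_le_trans _ (Th * Th)); [apply card_le_prod; [exact HLTh|] | exact card_le_square].
    apply (card_le_trans _ L); [| exact HLTh].
    exists (fun b : bool => if b then l1 else l0). intros [|] [|] E; congruence. }
  assert (Htriple : card_le (Th * Th * Th) Th).
  { apply (card_le_trans _ (Th * Th)); [| exact card_le_square].
    apply card_le_prod; [exact card_le_square | apply card_le_refl]. }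
  apply (card_le_trans _ (X * Th)).
  - apply card_le_sigT. intro s. apply (card_le_trans _ (Th * Th * Th)); [| exact Htriple].
    apply card_le_prod; [apply card_le_prod|]; apply card_le_matrix; auto using card_le_refl.
  - apply (card_le_trans _ (Th * Th)); [| exact card_le_square].
    apply card_le_prod; [exact card_le_chi | apply card_le_refl].
Qed.

End Coding.

Lemma not_card_le_matrix {K L X} {ltK : K -> K -> Prop} {ltX : X -> X -> Prop} {l0 l1 : L} :
  is_cardinal ltK -> regular ltK -> uncountable K -> strict_wo ltX ->
  card_lt (lpow L ltX) K -> l0 <> l1 -> forall s, ~ card_le K (matrix ltX s (L * bool)).
Proof.
  intros HK Hreg Hunc HX [_ HL] Hl s.
  assert (Hrow : ~ card_le K (seg ltX s -> L)).
  { intro H. apply HL, (card_le_trans _ _ _ H).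
    exists (existT _ s). intros g g'. apply inj_pairT2. }
  assert (Hrow2 : ~ card_le K (seg ltX s -> L * bool)).
  { intro H. apply (not_card_le_prod HK Hreg Hrow Hrow), (card_le_trans _ _ _ H).
    apply (card_le_trans _ (seg ltX s -> L * L)); [| apply card_le_arrow_prod].
    apply card_le_arrow, card_le_prod; [apply card_le_refl|].
    exists (fun b : bool => if b then l1 else l0). intros [|] [|] E; congruence. }
  apply (not_card_le_square_arrow HK Hreg Hunc (l0, true)); [| exact Hrow2].
  destruct (Finite_or_card_le_nat (seg ltX s)) as [Hfin | Hnat]; [now left|].
  right. now apply card_le_seg_square.
Qed.

Section Construction.
Context {K L X Th M : Type} {ltK : K -> K -> Prop} {ltX : X -> X -> Prop}.
Variables (e : K -> L -> bool) (l0 : L) (enc : code L Th ltX -> Th) (c1 : K -> K -> Th).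

Definition decode_color (al be : K) : Th :=
  match opt_choice (fun z => enc z = c1 al be) with
  | Some (existT _ s (dl, dr, t)) =>
      match opt_choice (fits e dl al), opt_choice (fits e dr be) with
      | Some i, Some j => t i j
      | _, _ => c1 al be
      end
  | None => c1 al be
  end.

Hypotheses (Henc : Injective enc) (He : Injective e).

Lemma decode_color_spec s (a b : seg ltX s -> K) t i j :
  Injective a -> Injective b ->
  c1 (a i) (b j) = enc (existT _ s (sep e l0 a, sep e l0 b, t)) ->
  decode_color (a i) (b j) = t i j.
Proof.
  intros Ha Hb E. unfold decode_color.
  rewrite (opt_choice_unique (fun z : code L Th ltX => enc z = c1 (a i) (b j))
             (existT _ s (sep e l0 a, sep e l0 b, t)));
    [| now rewrite E | intros z Ez; apply Henc; congruence].
  rewrite (opt_choice_unique _ i), (opt_choice_unique _ j); auto using fits_sep.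
  - intros k Hk. exact (fits_sep_unique e l0 b k j He Hb Hk).
  - intros k Hk. exact (fits_sep_unique e l0 a k i He Ha Hk).
Qed.

Hypotheses (HK : is_cardinal ltK) (Hreg : regular ltK) (HX : strict_wo ltX).
Hypothesis Hsmall : forall s, ~ card_le K (matrix ltX s (L * bool)).

Lemma constant_sep_subfamily s (A : K -> seg ltX s -> K) :
  exists (r : K -> K) d, Injective r /\ forall n, sep e l0 (A (r n)) = d.
Proof.
  destruct (pigeonhole HK Hreg (fun n => sep e l0 (A n)) (Hsmall s)) as [d [h Hh]].
  exists (fun n => proj1_sig (h n)), d. split.
  - intros n n' E. apply Hh, sig_eq, E.
  - intro n. exact (proj2_sig (h n)).
Qed.

Lemma pr0_decode_color (p : K -> K -> M) : pr1 ltK ltX c1 p -> pr0 ltK ltX decode_color p.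
Proof.
  intros H1 s A HA tau.
  destruct (constant_sep_subfamily s A) as [r [d [Hr Hd]]].
  destruct (H1 s (fun n => A (r n)) (good_family_comp Hr HA)
              (fun mu => enc (existT _ s (d, d, fun i j => tau i j mu)))) as [n [m [Hlt Hc]]].
  exists (r n), (r m). split; [exact Hlt|]. intros i j.
  apply (decode_color_spec s _ _ (fun i' j' => tau i' j' (p (A (r n) i) (A (r m) j))));
    try (exact (good_family_member_injective (proj1 HK) HX HA)).
  rewrite Hc, !Hd. reflexivity.
Qed.

Lemma pr0nu_decode_color N (p : K -> K -> M) :
  pr1nu ltK ltX N c1 p -> pr0nu ltK ltX N decode_color p.
Proof.
  intros H1 s A B HA HB.
  destruct (constant_sep_subfamily s B) as [r [d [Hr Hd]]].
  destruct (H1 s A (fun n => B (r n)) HA (good_family_comp Hr HB)) as [n Hn].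
  exists n. intro tau.
  destruct (Hn (fun mu => enc (existT _ s (sep e l0 (A n), d, fun i j => tau i j mu))))
    as [m [Hlt Hc]].
  exists (r m). split; [exact Hlt|]. intros i j.
  apply (decode_color_spec s _ _ (fun i' j' => tau i' j' (p (A n i) (B (r m) j))));
    [ exact (good_family_member_injective (proj1 HK) HX HA)
    | exact (good_family_member_injective (proj1 HK) HX HB) |].
  rewrite Hc, Hd. reflexivity.
Qed.

End Construction.

Theorem theorem4p1
  (K : Type) (ltK : K -> K -> Prop)      (* kappa *)
  (M L Th : Type)                        (* mu, lambda, theta *)
  (X : Type) (ltX : X -> X -> Prop)      (* chi *)
  (HK : is_cardinal ltK) (Hreg : regular ltK) (Hunc : uncountable K)
  (HX : is_cardinal ltX)
  (HM : card_le M K) (HL : card_le L K) (HXK : card_le X K) (HTh : card_le Th K)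
  (H1 : card_lt (lpow L ltX) K) (H2 : card_le K (L -> bool))
  (H3 : card_le (lpow L ltX) (lpow Th ltX)) (H4 : card_eq (lpow Th ltX) Th) :
  forall c1 : K -> K -> Th, exists c0 : K -> K -> Th,
    forall p : K -> K -> M,
      (pr1 ltK ltX c1 p -> pr0 ltK ltX c0 p) /\
      (forall N : Type, pr1nu ltK ltX N c1 p -> pr0nu ltK ltX N c0 p).
Proof.
  intro c1.
  destruct (uncountable_inhabited Hunc) as [k0].
  destruct (classic (exists s (u v : seg ltX s), u <> v)) as [[s2 [u [v Huv]]] | Hdeg].
  2: { assert (Hsub : forall s (i j : seg ltX s), i = j)
         by (intros s i j; apply NNPP; intro; apply Hdeg; eauto).
       exists c1. intro p. split.
       - apply (pr0_of_pr1_subsingleton (c1 k0 k0) Hsub).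
       - intro N. apply (pr0nu_of_pr1nu_subsingleton (c1 k0 k0) Hsub). }
  destruct H2 as [e He].
  destruct (uncountable_two_points Hunc (ex_intro _ e He)) as [l0 [l1 Hl]].
  destruct (card_le_code (c1 k0 k0) (proj1 H4) Huv Hl (card_le_trans _ _ _ H3 (proj1 H4)))
    as [enc Henc].
  pose proof (not_card_le_matrix HK Hreg Hunc (proj1 HX) H1 Hl) as Hsmall.
  exists (decode_color e enc c1). intro p. split.
  - exact (pr0_decode_color e l0 enc c1 Henc He HK Hreg (proj1 HX) Hsmall p).
  - intro N. exact (pr0nu_decode_color e l0 enc c1 Henc He HK Hreg (proj1 HX) Hsmall N p).
Qed.
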